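(* Let $n\ge 1$, $\mathbb{K}$ a field, $S=\mathbb{K}[x_1,\dots,x_n]$, and \[M_n^{(1)}=\langle x_i^{\,n} : 1\le i\le n\rangle+\langle x_i^{\,n-1}x_j^{\,n-1} : 1\le i<j\le n\rangle\subset S .\] Let $\tilde{\mathcal Q}_{K_{n+1}}$ be the reduced signless Laplacian of the complete graph $K_{n+1}$, i.e. the $n\times n$ matrix with every diagonal entry equal to $n$ and every off-diagonal entry equal to $1$. Then \[\dim_{\mathbb{K}} S/M_n^{(1)}=\det \tilde{\mathcal Q}_{K_{n+1}} .\]
   Context: For a simple graph $G$ on vertex set $\{0,1,\dots,n\}$, the signless Laplacian $\mathcal Q_G$ is the $(n+1)\times(n+1)$ matrix with $(\mathcal Q_G)_{ii}=\deg(i)$ and, for $i\ne j$, $(\mathcal Q_G)_{ij}$ equal to the number of edges between $i$ and $j$; the reduced signless Laplacian $\tilde{\mathcal Q}_G$ is obtained by deleting the row and column of vertex $0$. The ideal $M_n^{(1)}$ is the $1$-skeleton ideal of $K_{n+1}$ (generated by $m_\sigma=\prod_{i\in\sigma}x_i^{\#\{j\notin\sigma:\ j\sim i\}}$ for $\sigma\subseteq\{1,\dots,n\}$, $1\le|\sigma|\le2$). *)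

From HB Require Import structures.
From mathcomp Require Import all_boot all_order all_algebra.
From mathcomp Require Import mpoly.
Set Implicit Arguments. Unset Strict Implicit. Unset Printing Implicit Defensive.
Import GRing.Theory.
Local Open Scope ring_scope.

Definition in_ideal (K : fieldType) (n : nat) (gens : seq {mpoly K[n]})
  (p : {mpoly K[n]}) : Prop :=
  exists c : 'I_(size gens) -> {mpoly K[n]},
    p = \sum_(i < size gens) c i * gens`_i.

(* dim_K (S / <gens>) = d : there are d polynomials whose classes form a
   K-basis of the quotient S/<gens> (spanning + linearly independent mod I). *)
Definition quot_dim (K : fieldType) (n : nat) (gens : seq {mpoly K[n]})
  (d : nat) : Prop :=
  exists b : 'I_d -> {mpoly K[n]},
    (forall p : {mpoly K[n]}, exists a : 'I_d -> K,
        in_ideal gens (p - \sum_(i < d) a i *: b i)) /\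
    (forall a : 'I_d -> K, in_ideal gens (\sum_(i < d) a i *: b i) ->
        forall i, a i = 0).

Definition M1_gens (K : fieldType) (n : nat) : seq {mpoly K[n]} :=
  [seq 'X_i ^+ n | i : 'I_n <- enum 'I_n] ++
  [seq 'X_i ^+ (n - 1) * 'X_j ^+ (n - 1) |
     i : 'I_n <- enum 'I_n, j : 'I_n <- [seq j : 'I_n <- enum 'I_n | (nat_of_ord i < nat_of_ord j)%N]].

(* Signless Laplacian of the complete graph K_{n+1} on {0,..,n}:
   diagonal = degree = n, off-diagonal = number of edges = 1. *)
Definition signless_laplacian_K (n : nat) : 'M[int]_(n.+1) :=
  \matrix_(i, j) (if i == j then n%:Z else 1).

(* Reduced: delete the row and column of vertex 0. *)
Definition reduced_signless_laplacian_K (n : nat) : 'M[int]_n :=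
  \matrix_(i, j) signless_laplacian_K n (lift ord0 i) (lift ord0 j).

From HB Require Import structures.
From mathcomp Require Import all_boot all_order all_algebra.
From mathcomp Require Import mpoly.
From mathcomp Require Import zify.
Set Implicit Arguments. Unset Strict Implicit. Unset Printing Implicit Defensive.
Import GRing.Theory.
Local Open Scope ring_scope.

(* M_n^(1) is a monomial ideal, so the monomials divisible by none of its
   generators (the standard monomials) give a K-basis of S/M_n^(1). A monomial
   x^m is standard iff every m_i <= n - 1 and at most one m_i equals n - 1;
   there are (n-1)^n + n (n-1)^(n-1) = (2n-1) (n-1)^(n-1) of them. The reduced
   signless Laplacian is (n-1) I + J. For an n x n matrix a I + b J, let N be
   the first row of J with its diagonal entry removed; then N^2 = 0, and
   conjugating by 1 + N makes the matrix triangular with diagonal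
   a + n b, a, ..., a. *)

Section Ideal.
Variables (K : fieldType) (n : nat) (gens : seq {mpoly K[n]}).

Lemma in_ideal0 : in_ideal gens 0.
Proof. by exists (fun=> 0); rewrite big1 // => i _; rewrite mul0r. Qed.

Lemma in_idealD p q : in_ideal gens p -> in_ideal gens q -> in_ideal gens (p + q).
Proof.
move=> [c ->] [d ->]; exists (fun i => c i + d i).
by rewrite -big_split; apply: eq_bigr => i _; rewrite mulrDl.
Qed.

Lemma in_idealMl q p : in_ideal gens p -> in_ideal gens (q * p).
Proof.
move=> [c ->]; exists (fun i => q * c i).
by rewrite mulr_sumr; apply: eq_bigr => i _; rewrite mulrA.
Qed.

Lemma in_ideal_gen p : p \in gens -> in_ideal gens p.
Proof.
move=> gens_p; have ltp : (index p gens < size gens)%N by rewrite index_mem.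
exists (fun i => (i == Ordinal ltp)%:R).
rewrite (bigD1 (Ordinal ltp)) //= eqxx mul1r nth_index // big1 ?addr0 // => i /negbTE->.
by rewrite mul0r.
Qed.

Lemma in_ideal_sum (I : eqType) (r : seq I) (F : I -> {mpoly K[n]}) :
  (forall i, i \in r -> in_ideal gens (F i)) -> in_ideal gens (\sum_(i <- r) F i).
Proof.
elim: r => [|x r IHr] idealF; first by rewrite big_nil; exact: in_ideal0.
rewrite big_cons; apply: in_idealD; first by apply: idealF; rewrite mem_head.
by apply: IHr => i ri; apply: idealF; rewrite in_cons ri orbT.
Qed.

End Ideal.

Section MonomialIdeal.
Variables (K : fieldType) (n : nat).

Lemma mcoeffMX_eq0 (p : {mpoly K[n]}) g m : ~~ (g <= m)%MM -> (p * 'X_[g])@_m = 0.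
Proof.
apply: contraNeq; rewrite -mcoeff_msupp (perm_mem (msuppMX p g)) => /mapP[m' _ ->].
by rewrite lem_addr.
Qed.

Variables (T : finType) (e : T -> 'X_{1..n}).
Hypothesis e_inj : injective e.

Lemma mcoeff_sum_basis (a : 'I_#|T| -> K) t :
  (\sum_(i < #|T|) a i *: 'X_[e (enum_val i)])@_(e t) = a (enum_rank t).
Proof.
rewrite raddf_sum (bigD1 (enum_rank t)) //= mcoeffZ mcoeffX enum_rankK eqxx mulr1.
rewrite big1 ?addr0 // => i ne_it; rewrite mcoeffZ mcoeffX (inj_eq e_inj).
by rewrite (can2_eq enum_valK enum_rankK) (negbTE ne_it) mulr0.
Qed.

Variable G : seq 'X_{1..n}.
Hypothesis codom_e : forall m, (m \in codom e) = ~~ has (fun g => g <= m)%MM G.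

Lemma quot_dim_monomial : quot_dim [seq 'X_[g] : {mpoly K[n]} | g <- G] #|T|.
Proof.
exists (fun i => 'X_[e (enum_val i)]); split.
  move=> p; exists (fun i => p@_(e (enum_val i))); set q := p - _.
  have q_std0 t : q@_(e t) = 0 by rewrite mcoeffB mcoeff_sum_basis enum_rankK subrr.
  rewrite (mpolyE q); apply: in_ideal_sum => m; rewrite mcoeff_msupp => qm_neq0.
  have : m \notin codom e by apply/codomP => -[t mE]; rewrite mE q_std0 eqxx in qm_neq0.
  rewrite codom_e negbK => /hasP[g Gg g_le_m].
  rewrite -(submK g_le_m) mpolyXD mpoly_scaleAl.
  by apply/in_idealMl/in_ideal_gen/map_f.
move=> a [c sum_eq] j.
have := congr1 (mcoeff (e (enum_val j))) sum_eq.
rewrite mcoeff_sum_basis enum_valK raddf_sum => ->.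
rewrite big1 // => k _; have /mapP[g Gg ->] := mem_nth 0 (ltn_ord k).
apply: mcoeffMX_eq0; have := codom_f e (enum_val j).
by rewrite codom_e => /hasPn; apply.
Qed.

End MonomialIdeal.

Section M1Exponents.
Variable n : nat.
Implicit Types (i j : 'I_n) (m : 'X_{1..n}).

Definition M1_exps : seq 'X_{1..n} :=
  [seq (U_(i) *+ n)%MM | i : 'I_n <- enum 'I_n] ++
  [seq (U_(i) *+ (n - 1) + U_(j) *+ (n - 1))%MM |
     i : 'I_n <- enum 'I_n, j : 'I_n <- [seq j : 'I_n <- enum 'I_n | (i < j)%N]].

Lemma M1_gensE (K : fieldType) : M1_gens K n = [seq 'X_[g] | g <- M1_exps].
Proof.
rewrite map_cat map_allpairs -map_comp; congr (_ ++ _).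
  by apply: eq_map => i /=; rewrite mpolyXn.
by apply: eq_allpairs => i j /=; rewrite mpolyXD !mpolyXn.
Qed.

Lemma lem_U_mulmn i k m : (U_(i) *+ k <= m)%MM = (k <= m i)%N.
Proof.
apply/mnm_lepP/idP => [/(_ i)|k_le l]; rewrite mulmnE mnm1E ?eqxx ?mul1n //.
by case: eqP => [<-|_]; rewrite ?mul1n ?mul0n.
Qed.

Lemma lem_U2_mulmn i j k m : i != j ->
  (U_(i) *+ k + U_(j) *+ k <= m)%MM = (k <= m i)%N && (k <= m j)%N.
Proof.
move=> neq_ij; apply/mnm_lepP/andP => [le_m|[le_i le_j] l].
  have := le_m i; have := le_m j; rewrite !mnmDE !mulmnE !mnm1E !eqxx.
  by rewrite (negbTE neq_ij) eq_sym (negbTE neq_ij) /=; lia.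
rewrite mnmDE !mulmnE !mnm1E.
case: eqP => [<-|_]; case: eqP => [ji|_]; subst; rewrite ?mul1n ?mul0n ?add0n ?addn0 //.
by rewrite eqxx in neq_ij.
Qed.

Lemma has_M1_expsP m :
  reflect ((exists i, n <= m i) \/ exists i j, [/\ i < j, n - 1 <= m i & n - 1 <= m j])%N
          (has (fun g => g <= m)%MM M1_exps).
Proof.
have neq_lt i j : (i < j)%N -> i != j by rewrite -val_eqE => /ltn_eqF->.
rewrite has_cat; apply: (iffP orP) => -[].
- by move=> /hasP[_ /mapP[i _ ->]]; rewrite lem_U_mulmn; left; exists i.
- move=> /hasP[_ /allpairsPdep[i [j [_ + ->]]]]; rewrite mem_filter => /andP[ij _].
  by rewrite lem_U2_mulmn ?neq_lt // => /andP[]; right; exists i, j.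
- move=> [i le_i]; left; apply/hasP; exists (U_(i) *+ n)%MM; last by rewrite lem_U_mulmn.
  by apply: map_f; rewrite mem_enum.
- move=> [i [j [ij le_i le_j]]]; right; apply/hasP.
  exists (U_(i) *+ (n - 1) + U_(j) *+ (n - 1))%MM; last by rewrite lem_U2_mulmn ?neq_lt ?le_i.
  by apply/allpairsPdep; exists i, j; rewrite mem_enum mem_filter ij mem_enum.
Qed.

(* A standard exponent either has all entries below n - 1 (inl), or exactly one
   entry k equal to n - 1, the others being listed through lift k (inr). *)
Definition M1_basis_index : finType :=
  ({ffun 'I_n -> 'I_(n - 1)} + 'I_n * {ffun 'I_n.-1 -> 'I_(n - 1)})%type.

Definition M1_basis_exp (t : M1_basis_index) : 'X_{1..n} :=
  match t with
  | inl f => [multinom (f i : nat) | i < n]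
  | inr (k, f) => [multinom if unlift k i is Some j then (f j : nat) else (n - 1)%N | i < n]
  end.

Lemma M1_basis_exp_le t i : (M1_basis_exp t i <= n - 1)%N.
Proof.
case: t => [f|[k f]]; rewrite /= mnmE; first exact: ltnW.
by case: unlift => // j; apply: ltnW.
Qed.

Lemma M1_basis_exp_topE t k :
  (n - 1 <= M1_basis_exp t k)%N = if t is inr (k', _) then k' == k else false.
Proof.
case: t => [f|[k' f]]; rewrite /= mnmE; first by rewrite leqNgt ltn_ord.
case: (unliftP k' k) => [j eq_k|eq_k]; last by rewrite leqnn eq_k eqxx.
by rewrite leqNgt ltn_ord eq_k eq_liftF.
Qed.

Lemma M1_basis_exp_inj : injective M1_basis_exp.
Proof.
case=> [f|[k f]] [f'|[k' f']] eq_e.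
- congr inl; apply/ffunP => i; apply/val_inj.
  by move/mnmP/(_ i): eq_e; rewrite /= !mnmE.
- by have := M1_basis_exp_topE (inl f) k'; rewrite eq_e M1_basis_exp_topE eqxx.
- by have := M1_basis_exp_topE (inl f') k; rewrite -eq_e M1_basis_exp_topE eqxx.
- have eq_kk' : k = k'.
    by apply/eqP; rewrite -(M1_basis_exp_topE (inr (k, f))) eq_e M1_basis_exp_topE.
  subst k'; congr (inr (_, _)); apply/ffunP => j; apply/val_inj.
  by move/mnmP/(_ (lift k j)): eq_e; rewrite /= !mnmE liftK.
Qed.

Lemma codom_M1_basis_exp m :
  (m \in codom M1_basis_exp) = ~~ has (fun g => g <= m)%MM M1_exps.
Proof.
apply/codomP/(negPP (has_M1_expsP m)) => [[t ->] [[i]|[i [j [ij le_i le_j]]]] | not_div].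
- by have := M1_basis_exp_le t i; have := ltn_ord i; lia.
- case: t le_i le_j => [f|[k f]]; rewrite !M1_basis_exp_topE // => /eqP eq_ki /eqP eq_kj.
  by rewrite -eq_ki -eq_kj ltnn in ij.
have le_top i : (m i <= n - 1)%N.
  by rewrite leqNgt; apply/negP => lt_i; apply: not_div; left; exists i; lia.
have one_top i j : i != j -> (n - 1 <= m i -> m j < n - 1)%N.
  move=> neq_ij le_i; rewrite ltnNge; apply/negP => le_j; apply: not_div; right.
  case: (ltngtP i j) => [ij|ji|/val_inj eq_ij]; first by exists i, j.
    by exists j, i.
  by rewrite eq_ij eqxx in neq_ij.
case: (pickP (fun k => n - 1 <= m k)%N) => [k /= le_k | /= no_top].
  have lt_top (j : 'I_n.-1) : (m (lift k j) < n - 1)%N by apply: one_top le_k; rewrite neq_lift.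
  exists (inr (k, [ffun j => Ordinal (lt_top j)])); apply/mnmP => i; rewrite /= mnmE.
  case: (unliftP k i) => [j ->|eq_ki]; first by rewrite ffunE.
  by apply/eqP; rewrite eq_ki eqn_leq le_k le_top.
have lt_top i : (m i < n - 1)%N by rewrite ltnNge no_top.
by exists (inl [ffun i => Ordinal (lt_top i)]); apply/mnmP => i; rewrite /= mnmE ffunE.
Qed.

Lemma card_M1_basis_index :
  #|{: M1_basis_index}| = ((n - 1) ^ n + n * (n - 1) ^ n.-1)%N.
Proof. by rewrite card_sum card_prod !card_ffun !card_ord. Qed.

Lemma quot_dim_M1_gens (K : fieldType) : quot_dim (M1_gens K n) #|{: M1_basis_index}|.
Proof.
by rewrite M1_gensE; apply: (quot_dim_monomial K M1_basis_exp_inj codom_M1_basis_exp).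
Qed.

End M1Exponents.

Section DetScalarAddConst.
Variables (R : comRingType) (m : nat).
Implicit Types X : 'M[R]_m.+1.

Definition first_row_mx : 'M[R]_m.+1 := \matrix_(i, j) ((i == ord0) && (j != ord0))%:R.
Local Notation N := first_row_mx.

Lemma mulmx_first_rowE X i j : (X *m N) i j = (j != ord0)%:R * X i ord0.
Proof.
rewrite !mxE big_ord_recl mxE eqxx /= big1 ?addr0 1?mulrC // => k _.
by rewrite mxE lift_eqF mulr0.
Qed.

Lemma mul_first_row_mxE X i j :
  (N *m X) i j = (i == ord0)%:R * \sum_(k < m) X (lift ord0 k) j.
Proof.
rewrite !mxE big_ord_recl mxE eqxx andbF mul0r add0r mulr_sumr.
by apply: eq_bigr => k _; rewrite mxE lift_eqF andbT.
Qed.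

Lemma mulmx_1B_first_rowE X i j :
  (X *m (1%:M - N)) i j = X i j - (j != ord0)%:R * X i ord0.
Proof. by rewrite mulmxBr mulmx1 2!mxE mulmx_first_rowE. Qed.

Lemma mul_1D_first_row_mxE X i j :
  ((1%:M + N) *m X) i j = X i j + (i == ord0)%:R * \sum_(k < m) X (lift ord0 k) j.
Proof. by rewrite mulmxDl mul1mx mxE mul_first_row_mxE. Qed.

Lemma first_row_mx_sqr : N *m N = 0.
Proof. by apply/matrixP => i j; rewrite mulmx_first_rowE !mxE eqxx andbF mulr0. Qed.

Lemma det_conj_first_row X : \det ((1%:M + N) *m X *m (1%:M - N)) = \det X.
Proof.
rewrite !det_mulmx mulrAC -det_mulmx mulmxBr mulmx1 mulmxDl mul1mx first_row_mx_sqr.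
by rewrite addr0 addrK det1 mul1r.
Qed.

Variables a b : R.
Local Notation A := (a%:M + const_mx b : 'M[R]_m.+1).

Lemma det_scalar_add_const : \det A = a ^+ m * (a + b *+ m.+1).
Proof.
have AE i j : A i j = a *+ (i == j) + b by rewrite !mxE.
have AN_lift i r :
    (A *m (1%:M - N)) i (lift ord0 r) = a *+ (i == lift ord0 r) - a *+ (i == ord0).
  by rewrite mulmx_1B_first_rowE lift_eqF mul1r !AE opprD addrACA subrr addr0.
rewrite -det_conj_first_row -mulmxA; set B := _ *m _.
have B_lift i r : B i (lift ord0 r) = a *+ (i == lift ord0 r).
  rewrite mul_1D_first_row_mxE AN_lift.
  under eq_bigr => k _ do rewrite AN_lift (inj_eq lift_inj) lift_eqF subr0.
  rewrite (bigD1 r) //= eqxx big1 ?addr0 => [|k /negbTE->//].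
  by rewrite mulr_natl subrK.
have B00 : B ord0 ord0 = a + b *+ m.+1.
  rewrite mul_1D_first_row_mxE !mulmx_1B_first_rowE eqxx /= mul0r !subr0 mul1r AE eqxx.
  under eq_bigr => k _ do rewrite mulmx_1B_first_rowE eqxx mul0r subr0 AE lift_eqF add0r.
  by rewrite sumr_const card_ord -addrA -mulrS.
rewrite det_trig; last first.
  apply/is_trig_mxP => i j lt_ij; case: (unliftP ord0 j) => [r eq_j|eq_j].
    by rewrite eq_j B_lift -eq_j; case: eqP lt_ij => // ->; rewrite ltnn.
  by rewrite eq_j in lt_ij.
rewrite big_ord_recl B00 mulrC; congr (_ * _).
by under eq_bigr => r _ do rewrite B_lift eqxx mulr1n; rewrite prodr_const card_ord.
Qed.

End DetScalarAddConst.

Theorem corollary3p4 (K : fieldType) (n : nat) (hn : (1 <= n)%N) :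
  exists d : nat, quot_dim (M1_gens K n) d /\
    d%:Z = \det (reduced_signless_laplacian_K n).
Proof.
exists #|{: M1_basis_index n}|; split; first exact: quot_dim_M1_gens.
case: n hn => // m _.
have -> : reduced_signless_laplacian_K m.+1 = m%:Z%:M + const_mx 1.
  apply/matrixP => i j; rewrite !mxE (inj_eq lift_inj).
  by case: (i == j); rewrite ?mulr1n ?mulr0n ?add0r //; lia.
have natzX k l : (k ^ l)%N%:Z = k%:Z ^+ l by rewrite -natz natrX natz.
rewrite det_scalar_add_const card_M1_basis_index subn1 /= natz -natzX -PoszD -PoszM.
by congr Posz; rewrite expnS; lia.
Qed.
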